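(* Let $W$ be a vector lattice carrying a faithful positive linear functional $\psi$. Assume that $W$ is monotone sequentially complete, and that $V$ is a monotone sequentially closed subset of $W$. Then $W$ is monotone complete, and $V$ is monotone closed in $W$. Moreover, the following monotone selection principle holds: whenever $J$ is a non-empty upward directed subset of $V$ that is upper bounded in $W$, there exists an increasing sequence $(j_n)$ in $J$ with $\sup_n j_n = \sup J$ in $W$; in fact every increasing sequence $(j_n)$ in $J$ with $\sup_n \psi(j_n) = \sup_{j\in J}\psi(j)$ satisfies $\sup_n j_n = \sup J$ in $W$, and also $\sup_n j_n = \sup J$ in $V$.
   Context: Let $W$ be an ordered (real) vector space with positive cone $W_+$. $W$ is called monotone complete if every non-empty upward directed subset of $W$ that is bounded above has a supremum in $W$; $W$ is called monotone sequentially complete if every increasing sequence in $W$ that is bounded above has a supremum in $W$. If $W$ is monotone complete, a subset $V\subseteq W$ is called monotone closed in $W$ if $V$ contains the supremum in $W$ of every non-empty upward directed subset of $V$ that is upper bounded in $W$. If $W$ is monotone sequentially complete, $V\subseteq W$ is called monotone sequentially closed in $W$ if $V$ contains the supremum in $W$ of every increasing sequence in $V$ that is upper bounded in $W$. A positive linear functional $\psi$ on $W$ is called faithful if $\psi(a)>0$ for every $a\in W_+\setminus\{0\}$. *)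

From HB Require Import structures.
From mathcomp Require Import all_boot all_order all_algebra.
From mathcomp Require Import boolp classical_sets reals.
Set Implicit Arguments. Unset Strict Implicit. Unset Printing Implicit Defensive.
Import Order.TTheory GRing.Theory Num.Theory.
Local Open Scope ring_scope.
Local Open Scope classical_set_scope.

Section Defs.
Variables (R : realType) (W : lmodType R) (le : W -> W -> Prop).

Definition ordered_vector_space : Prop :=
  [/\ (forall x, le x x),
      (forall x y z, le x y -> le y z -> le x z),
      (forall x y, le x y -> le y x -> x = y),
      (forall x y z, le x y -> le (x + z) (y + z)) &
      (forall (a : R) x y, 0 <= a -> le x y -> le (a *: x) (a *: y))].

Definition upper_bound (A : set W) (u : W) : Prop := forall a, A a -> le a u.
Definition bounded_above (A : set W) : Prop := exists u, upper_bound A u.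

Definition is_sup (A : set W) (s : W) : Prop :=
  upper_bound A s /\ forall u, upper_bound A u -> le s u.

Definition is_sup_in (V : set W) (A : set W) (s : W) : Prop :=
  V s /\ upper_bound A s /\ forall u, V u -> upper_bound A u -> le s u.

Definition vector_lattice : Prop :=
  ordered_vector_space /\ forall x y, exists s, is_sup [set x; y] s.

Definition upward_directed (A : set W) : Prop :=
  forall a b, A a -> A b -> exists2 c, A c & le a c /\ le b c.

Definition increasing (u : nat -> W) : Prop := forall n, le (u n) (u n.+1).

Definition monotone_complete : Prop :=
  forall A : set W, A !=set0 -> upward_directed A -> bounded_above A ->
    exists s, is_sup A s.

Definition monotone_seq_complete : Prop :=
  forall u : nat -> W, increasing u -> bounded_above (range u) ->
    exists s, is_sup (range u) s.

Definition monotone_closed (V : set W) : Prop :=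
  forall A : set W, A `<=` V -> A !=set0 -> upward_directed A ->
    bounded_above A -> forall s, is_sup A s -> V s.

Definition monotone_seq_closed (V : set W) : Prop :=
  forall u : nat -> W, (forall n, V (u n)) -> increasing u ->
    bounded_above (range u) -> forall s, is_sup (range u) s -> V s.

Definition linear_functional (psi : W -> R) : Prop :=
  forall (a : R) x y, psi (a *: x + y) = a * psi x + psi y.

Definition positive_functional (psi : W -> R) : Prop :=
  linear_functional psi /\ forall x, le 0 x -> 0 <= psi x.

Definition faithful (psi : W -> R) : Prop :=
  forall x, le 0 x -> x <> 0 -> 0 < psi x.

End Defs.

From HB Require Import structures.
From mathcomp Require Import all_boot all_order all_algebra.
From mathcomp Require Import boolp classical_sets reals.
Import Order.TTheory GRing.Theory Num.Theory.
Local Open Scope ring_scope.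
Local Open Scope classical_set_scope.

(* In an upward directed, upper bounded J one can choose an increasing
   sequence (j_n) with sup_n psi(j_n) = sup psi(J).  Any such sequence is
   cofinal in J: if t bounds every j_n and a is in J, the positive part
   e = (a - t) v 0 satisfies psi e + psi j_n <= sup psi(J) for all n (pass to
   an element of J above both a and j_n), so psi e <= 0, hence e = 0 by
   faithfulness, i.e. a <= t.  Thus sup J = sup_n j_n, which exists by
   monotone sequential completeness and lies in V when J does. *)

Section LinearFunctional.
Context {R : realType} {W : lmodType R} {psi : W -> R}.
Hypothesis psi_lin : linear_functional psi.

Lemma linear_functional0 : psi 0 = 0.
Proof.
have := psi_lin 1 0 0; rewrite scale1r addr0 mul1r => psi00.
by apply: (@addrI _ (psi 0)); rewrite addr0 -psi00.
Qed.

Lemma linear_functionalB x y : psi (x - y) = psi x - psi y.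
Proof.
have psiN z : psi (- z) = - psi z.
  by rewrite -[- z]addr0 -scaleN1r psi_lin linear_functional0 addr0 mulN1r.
by rewrite -[x]scale1r psi_lin mul1r psiN scale1r.
Qed.

End LinearFunctional.

Section OrderedVectorSpace.
Context {R : realType} {W : lmodType R} {le : W -> W -> Prop}.
Hypothesis ovs : ordered_vector_space le.

Lemma ovs_refl x : le x x.
Proof. by case: ovs. Qed.

Lemma ovs_trans y x z : le x y -> le y z -> le x z.
Proof. by case: ovs => _ le_trans _ _ _; apply: le_trans. Qed.

Lemma ovs_lerD2r z {x y} : le x y -> le (x + z) (y + z).
Proof. by case: ovs => _ _ _ leD _; apply: leD. Qed.

Lemma ovs_subr_ge0 x y : le 0 (y - x) <-> le x y.
Proof.
split=> [/(ovs_lerD2r x)|/(ovs_lerD2r (- x))]; first by rewrite add0r subrK.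
by rewrite subrr.
Qed.

Lemma ovs_lerB2l a {x t} : le x t -> le (a - t) (a - x).
Proof.
move=> le_xt; apply/ovs_subr_ge0.
by rewrite opprB addrC addrA subrK; apply/ovs_subr_ge0.
Qed.

Lemma directed_increasing_majorant {J : set W} {b : nat -> W} :
  upward_directed le J -> (forall n, J (b n)) ->
  exists j : nat -> W,
    [/\ forall n, J (j n), increasing le j & forall n, le (b n) (j n)].
Proof.
move=> dirJ Jb.
have : forall p : W * W, exists c, J p.1 /\ J p.2 -> J c /\ le p.1 c /\ le p.2 c.
  move=> [x y]; have [[Jx Jy]|nJ] := pselect (J x /\ J y).
    by have [c Jc le_c] := dirJ _ _ Jx Jy; exists c.
  by exists 0.
case/choice => ub ubP.
pose j := fix j n := if n is n'.+1 then ub (j n', b n) else b 0.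
have Jj n : J (j n).
  elim: n => [|n IH]; first exact: Jb.
  exact: (ubP (j n, b n.+1) (conj IH (Jb _))).1.
have step n : le (j n) (j n.+1) /\ le (b n.+1) (j n.+1).
  exact: (ubP (j n, b n.+1) (conj (Jj n) (Jb _))).2.
exists j; split=> // [n|[|n]].
- exact: (step n).1.
- exact: ovs_refl.
- exact: (step n).2.
Qed.

Context {psi : W -> R}.
Hypothesis psi_pos : positive_functional le psi.

Lemma positive_functional_le {x y} : le x y -> psi x <= psi y.
Proof.
case: psi_pos => psi_lin psi_ge0 /ovs_subr_ge0 /psi_ge0.
by rewrite linear_functionalB // subr_ge0.
Qed.

Lemma has_ubound_image (J : set W) :
  bounded_above le J -> has_ubound [set psi x | x in J].
Proof.
by move=> [u ubu]; exists (psi u) => _ [x Jx <-]; apply/positive_functional_le/ubu.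
Qed.

Lemma exists_psi_sup_seq {J : set W} :
  J !=set0 -> upward_directed le J -> bounded_above le J ->
  exists j : nat -> W, [/\ forall n, J (j n), increasing le j &
    sup (range (fun n => psi (j n))) = sup [set psi x | x in J]].
Proof.
move=> [x0 Jx0] dirJ boundJ; set al := sup [set psi x | x in J].
have supJ : has_sup [set psi x | x in J].
  by split; [exists (psi x0), x0 | exact: has_ubound_image].
have : forall n : nat, exists b, J b /\ al - n.+1%:R^-1 < psi b.
  move=> n; have n_gt0 : (0 : R) < n.+1%:R^-1 by rewrite invr_gt0 ltr0n.
  by have [_ [b Jb <-] ?] := sup_adherent n_gt0 supJ; exists b.
case/choice => b bP.
have [j [Jj incj le_bj]] := directed_increasing_majorant dirJ (fun n => (bP n).1).
exists j; split=> //.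
have psij_le n : psi (j n) <= al by apply: sup_upper_bound => //; exists (j n).
have sup_le : sup (range (fun n => psi (j n))) <= al.
  by apply: ge_sup => [|_ [n _ <-]]; [exists (psi (j 0)), 0%N | exact: psij_le].
apply/eqP; rewrite eq_le sup_le /= leNgt; apply/negP => /ltr_add_invr[k].
have : al - k.+1%:R^-1 < sup (range (fun n => psi (j n))).
  apply: (lt_le_trans (bP k).2); apply: le_trans (positive_functional_le (le_bj k)) _.
  by apply: ub_le_sup; [exists al => _ [n _ <-] | exists k].
by rewrite ltrBlDr => lt_al /ltW /(lt_le_trans lt_al); rewrite ltxx.
Qed.

Hypothesis lattice : forall x y : W, exists s, is_sup le [set x; y] s.
Hypothesis psi_faithful : faithful le psi.

Lemma faithful_eq0 {e} : le 0 e -> psi e <= 0 -> e = 0.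
Proof.
move=> e_ge0 psi_e_le0; apply/eqP/negPn/negP => /eqP e_neq0.
by have := psi_faithful _ e_ge0 e_neq0; rewrite ltNge psi_e_le0.
Qed.

Lemma pos_part_le_subr {a t x c e} : is_sup le [set a - t; 0] e ->
  le x t -> le a c -> le x c -> le e (c - x).
Proof.
move=> [_ e_least] le_xt le_ac le_xc; apply: e_least => _ [->|->].
  exact: ovs_trans (ovs_lerB2l a le_xt) (ovs_lerD2r (- x) le_ac).
exact/ovs_subr_ge0.
Qed.

Lemma upper_bound_psi_sup_seq {J : set W} {j : nat -> W} {t} :
  upward_directed le J -> bounded_above le J -> (forall n, J (j n)) ->
  sup (range (fun n => psi (j n))) = sup [set psi x | x in J] ->
  upper_bound le (range j) t -> upper_bound le J t.
Proof.
move=> dirJ boundJ Jj psi_sup ubt a Ja.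
have [e sup_e] := lattice (a - t) 0; have [e_ub _] := sup_e.
have [psi_lin _] := psi_pos.
have psi_e_le n : psi e + psi (j n) <= sup [set psi x | x in J].
  have [c Jc [le_ac le_jc]] := dirJ _ _ Ja (Jj n).
  have le_e := pos_part_le_subr sup_e (ubt _ (imageT _ n)) le_ac le_jc.
  have := positive_functional_le le_e.
  rewrite linear_functionalB // -lerBrDr => /le_trans; apply; rewrite lerD2r.
  by apply: ub_le_sup; [exact: has_ubound_image | exists c].
have psi_e_le0 : psi e <= 0.
  suff : sup (range (fun n => psi (j n))) <= sup [set psi x | x in J] - psi e.
    by rewrite psi_sup lerBrDr gerDl.
  by apply: ge_sup => [|_ [n _ <-]]; [exists (psi (j 0)), 0%N | rewrite lerBrDl].
have e_eq0 := faithful_eq0 (e_ub _ (or_intror erefl)) psi_e_le0.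
have := e_ub _ (or_introl erefl); rewrite e_eq0.
by move=> /ovs_subr_ge0; rewrite add0r opprB => /ovs_subr_ge0.
Qed.

Lemma is_sup_psi_sup_seq {J : set W} {j : nat -> W} {s} :
  upward_directed le J -> bounded_above le J -> (forall n, J (j n)) ->
  sup (range (fun n => psi (j n))) = sup [set psi x | x in J] ->
  is_sup le J s -> is_sup le (range j) s.
Proof.
move=> dirJ boundJ Jj psi_sup [ubs s_least]; split=> [_ [n _ <-]|u ubu].
  exact: ubs.
by apply/s_least/(upper_bound_psi_sup_seq dirJ boundJ Jj psi_sup).
Qed.

Lemma monotone_complete_of_seq : monotone_seq_complete le -> monotone_complete le.
Proof.
move=> msc J J0 dirJ boundJ.
have [j [Jj incj psi_sup]] := exists_psi_sup_seq J0 dirJ boundJ.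
have [t [ubt t_least]] : exists t, is_sup le (range j) t.
  by apply: msc incj _; case: boundJ => u ubu; exists u => _ [n _ <-]; apply: ubu.
exists t; split; first exact: upper_bound_psi_sup_seq dirJ boundJ Jj psi_sup ubt.
by move=> u ubu; apply: t_least => _ [n _ <-]; apply: ubu.
Qed.

Lemma is_sup_in_psi_sup_seq {V J : set W} {j : nat -> W} {s} :
  monotone_seq_closed le V -> J `<=` V ->
  upward_directed le J -> bounded_above le J -> (forall n, J (j n)) ->
  increasing le j ->
  sup (range (fun n => psi (j n))) = sup [set psi x | x in J] ->
  is_sup le J s -> is_sup_in le V (range j) s.
Proof.
move=> mscV JV dirJ boundJ Jj incj psi_sup supJ.
have [ubs s_least] := is_sup_psi_sup_seq dirJ boundJ Jj psi_sup supJ.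
split; last by split=> // u _; apply: s_least.
apply: (mscV j (fun n => JV _ (Jj n)) incj _ s (conj ubs s_least)).
by exists s.
Qed.

Lemma monotone_closed_of_seq {V : set W} :
  monotone_seq_closed le V -> monotone_closed le V.
Proof.
move=> mscV J JV J0 dirJ boundJ s supJ.
have [j [Jj incj psi_sup]] := exists_psi_sup_seq J0 dirJ boundJ.
by have [] := is_sup_in_psi_sup_seq mscV JV dirJ boundJ Jj incj psi_sup supJ.
Qed.

End OrderedVectorSpace.

Theorem mainTheorem1 (R : realType) (W : lmodType R) (le : W -> W -> Prop)
  (psi : W -> R) (V : set W) :
  vector_lattice le ->
  positive_functional le psi -> faithful le psi ->
  monotone_seq_complete le ->
  monotone_seq_closed le V ->
  [/\ monotone_complete le,
      monotone_closed le V &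
      forall J : set W, J `<=` V -> J !=set0 -> upward_directed le J ->
        bounded_above le J ->
        (exists j : nat -> W, [/\ (forall n, J (j n)), increasing le j &
            forall s, is_sup le J s -> is_sup le (range j) s]) /\
        (forall j : nat -> W, (forall n, J (j n)) -> increasing le j ->
           sup (range (fun n => psi (j n))) = sup [set psi x | x in J] ->
           forall s, is_sup le J s ->
             is_sup le (range j) s /\ is_sup_in le V (range j) s)].
Proof.
move=> [ovs lattice] psi_pos psi_faithful msc mscV.
have sup_seq := is_sup_psi_sup_seq ovs psi_pos lattice psi_faithful.
have sup_in_seq := is_sup_in_psi_sup_seq ovs psi_pos lattice psi_faithful.
split.
- exact (monotone_complete_of_seq ovs psi_pos lattice psi_faithful msc).
- exact (monotone_closed_of_seq ovs psi_pos lattice psi_faithful mscV).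
move=> J JV J0 dirJ boundJ; split.
  have [j [Jj incj psi_sup]] := exists_psi_sup_seq ovs psi_pos J0 dirJ boundJ.
  by exists j; split=> // s; apply: sup_seq dirJ boundJ Jj psi_sup.
move=> j Jj incj psi_sup s supJ; split.
  exact: sup_seq dirJ boundJ Jj psi_sup supJ.
exact: sup_in_seq mscV JV dirJ boundJ Jj incj psi_sup supJ.
Qed.
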